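(* Let $k\geq2$ and for $\lambda>0$ consider the uniform mixture of $\mathcal D_1,\dots,\mathcal D_k$ where $\mathcal D_i=\mathcal N(\lambda e_i, I_k)$ on $\mathbb R^k$ ($e_i$ the $i$-th standard basis vector). Let $Z$ be a sample from the mixture and $J$ the index of the component it was drawn from. Then one can choose $\lambda=\Theta(\sqrt{\log k})$ such that every estimator $\Psi$ (not necessarily efficiently computable) satisfies $\mathbb P(\Psi(Z)\neq J)\geq c$ for some absolute constant $c>0$. *)

From HB Require Import structures.
From mathcomp Require Import all_boot all_order all_algebra.
From mathcomp Require Import all_classical all_reals all_analysis.
Set Implicit Arguments. Unset Strict Implicit. Unset Printing Implicit Defensive.
Import Order.TTheory GRing.Theory Num.Theory.
Local Open Scope classical_set_scope.
Local Open Scope ring_scope.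

(* Points of R^n are n-tuples of reals ('n.-tuple R',
   equipped by the library with the product sigma-algebra generated by the
   coordinate projections). *)

(* [gauss_iint n f m] = E[f(X)] where X = (X_0,...,X_{n-1}) has independent
   coordinates X_j ~ N(m j, 1), i.e. X ~ N(m, I_n).  It is the iterated
   integral against the product of the one-dimensional normal laws
   [normal_prob (m j) 1]; for nonnegative measurable f this is the integral
   against the product measure N(m, I_n) (Tonelli). *)
Fixpoint gauss_iint {R : realType} (n : nat) :
  (n.-tuple R -> \bar R) -> (nat -> R) -> \bar R :=
  match n with
  | 0 => fun f _ => f [tuple]
  | n'.+1 => fun f m =>
      (\int[normal_prob (m 0%N) 1]_x
          gauss_iint (fun t : n'.-tuple R => f [tuple of x :: t])
                     (fun j => m j.+1))%E
  end.

Definition comp_mean {R : realType} (lambda : R) (i : nat) : nat -> R :=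
  fun j => if j == i then lambda else 0.

(* P(Psi(Z) <> J) for (J, Z) with J uniform on {0..k-1} and Z | J = i ~ D_i. *)
Definition mixture_error {R : realType} (k : nat) (lambda : R)
  (Psi : k.-tuple R -> 'I_k) : \bar R :=
  ((k%:R)^-1%:E * \sum_(i < k)
      gauss_iint (fun z => ((Psi z != i)%:R)%:E) (comp_mean lambda i))%E.

Definition measurable_estimator {R : realType} (k : nat)
  (Psi : k.-tuple R -> 'I_k) : Prop :=
  forall i : 'I_k, measurable (Psi @^-1` [set i]).

From HB Require Import structures.
From mathcomp Require Import all_boot all_order all_algebra.
From mathcomp Require Import all_classical all_reals all_analysis.
From mathcomp Require Import measurable_realfun.
From mathcomp Require Import ring lra.
Import Order.TTheory GRing.Theory Num.Theory.

(* Under N(lambda e_i, I_k) the event {Psi(Z) <> i} has the same probability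
   as under N(0, I_k) weighted by the likelihood ratio rho(Z_i), where
   rho(x) = exp(lambda x - lambda^2/2).  Summing over i, the error of Psi is
   (1/k) E_0[sum_i 1{Psi(Z) <> i} rho(Z_i)].  Truncate each coordinate at
   tau = lambda + 3: the sum sum_i rho(Z_i) 1{Z_i <= tau} exceeds
   sum_i 1{Psi(Z) <> i} rho(Z_i) by at most rho(tau), the term of the guessed
   index, and has mean at least k (1 - exp(-9/2)) by a Chernoff bound.  So the
   error is at least 1 - exp(-9/2) - rho(tau)/k, and for lambda = sqrt(ln k)/32
   one has rho(tau) <= k^(1/4), hence rho(tau)/k <= exp(-3/4 ln k) <= 8/11. *)

Local Open Scope classical_set_scope.
Local Open Scope ring_scope.

(* The density of N(l, 1) with respect to N(0, 1). *)
Definition normal_lr {R : realType} (l x : R) : R := expR (l * x - l ^+ 2 / 2).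

Lemma measurable_natmul_bool {R : realType} d (T : measurableType d)
    (b : T -> bool) :
  measurable_fun setT b -> measurable_fun setT (fun x => ((b x)%:R : R)).
Proof. by apply: (measurableT_comp (f := fun c : bool => (c%:R : R))). Qed.

Section normal_tilt.
Context {R : realType}.
Local Open Scope ereal_scope.

Lemma measurable_expR_affine (b c : R) :
  measurable_fun setT (fun x : R => (expR (b * x + c))%:E).
Proof.
apply/measurable_EFinP; apply: measurableT_comp => //.
by apply: measurable_funD => //; exact: measurable_funM.
Qed.

Lemma measurable_normal_lr (l : R) :
  measurable_fun setT (fun x : R => (normal_lr l x)%:E).
Proof. exact: measurable_expR_affine. Qed.

Lemma integral_normal_prob (a : R) (w : R -> \bar R) :
  (forall x, 0 <= w x) -> measurable_fun setT w ->
  \int[normal_prob a 1]_x w x =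
  \int[lebesgue_measure]_x (w x * (normal_pdf a 1 x)%:E).
Proof.
move=> w0 mw; have dom := normal_prob_dominates a 1.
rewrite -(Radon_Nikodym_SigmaFinite.change_of_variables dom)//.
have mpdf : measurable_fun setT (fun x => (normal_pdf a 1 x)%:E).
  by apply/measurable_EFinP; exact: measurable_normal_pdf.
apply: ae_eq_integral => //.
- apply: emeasurable_funM => //.
  exact: measurable_int (Radon_Nikodym_SigmaFinite.f_integrable dom).
- exact: emeasurable_funM.
- apply: ae_eqe_mul2l; apply: integral_ae_eq => //.
  + exact: Radon_Nikodym_SigmaFinite.f_integrable dom.
  + by move=> E _ mE; rewrite -Radon_Nikodym_SigmaFinite.f_integral.
Qed.

Lemma normal_pdf_tilt (b c x : R) :
  (expR (b * x + c) * normal_pdf 0 1 x =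
   expR (c + b ^+ 2 / 2) * normal_pdf b 1 x)%R.
Proof.
rewrite !normal_pdfE ?oner_neq0// /normal_fun mulrCA -expRD [RHS]mulrCA -expRD.
by congr (_ * expR _)%R; rewrite expr1n mulr2n; field.
Qed.

Lemma normal_mgf (b c : R) :
  \int[normal_prob 0 1]_x (expR (b * x + c))%:E = (expR (c + b ^+ 2 / 2))%:E.
Proof.
rewrite integral_normal_prob//; last exact: measurable_expR_affine.
under eq_integral => x _ do rewrite -EFinM normal_pdf_tilt EFinM.
rewrite ge0_integralZl_EFin//.
- by rewrite integral_normal_pdf mule1.
- by move=> x _; rewrite lee_fin normal_pdf_ge0.
- by apply/measurable_EFinP; exact: measurable_normal_pdf.
Qed.

Lemma normal_tilt (l : R) (w : R -> \bar R) :
  (forall x, 0 <= w x) -> measurable_fun setT w ->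
  \int[normal_prob 0 1]_x (w x * (normal_lr l x)%:E) =
  \int[normal_prob l 1]_x w x.
Proof.
move=> w0 mw; rewrite !integral_normal_prob//; last 2 first.
- by move=> x; rewrite mule_ge0// lee_fin expR_ge0.
- by apply: emeasurable_funM => //; exact: measurable_normal_lr.
apply: eq_integral => x _; rewrite -muleA -EFinM normal_pdf_tilt.
by rewrite addNr expR0 mul1r.
Qed.

Lemma measurable_normal_lr_trunc (l t : R) :
  measurable_fun setT (fun x : R => (normal_lr l x * (x <= t)%R%:R)%:E).
Proof.
apply/measurable_EFinP/measurable_funM.
  by apply/measurable_EFinP; exact: measurable_normal_lr.
by apply/measurable_natmul_bool/measurable_fun_ler.
Qed.

(* Chernoff: on [x > l + a] the ratio is below
   [exp((l + a) x - l^2/2 - a (l + a))], whose N(0,1)-mean is [exp(-a^2/2)]. *)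
Lemma normal_lr_trunc (l a : R) : (0 <= a)%R ->
  (1 - expR (- (a ^+ 2 / 2)))%:E <=
  \int[normal_prob 0 1]_x (normal_lr l x * (x <= l + a)%R%:R)%:E.
Proof.
move=> a0; set I := \int[_]_x _.
pose c := (- (l ^+ 2 / 2) - a * (l + a))%R.
have lr_le x : (normal_lr l x <=
    normal_lr l x * (x <= l + a)%R%:R + expR ((l + a) * x + c))%R.
  rewrite /normal_lr /c; have [xla|xla] := leP x (l + a)%R.
    by rewrite mulr1 lerDl expR_ge0.
  by rewrite mulr0 add0r ler_expR; nra.
have mtrunc := measurable_normal_lr_trunc l (l + a).
have : 1 <= I + (expR (- (a ^+ 2 / 2)))%:E.
  have -> : (- (a ^+ 2 / 2) = c + (l + a) ^+ 2 / 2)%R by rewrite /c; field.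
  rewrite -normal_mgf -ge0_integralD//; last 2 first.
  - by move=> x _; rewrite lee_fin mulr_ge0 ?expR_ge0.
  - exact: measurable_expR_affine.
  have lr_mean : \int[normal_prob 0 1]_x (expR (l * x - l ^+ 2 / 2))%:E = 1.
    by rewrite normal_mgf addNr expR0.
  rewrite -lr_mean.
  apply: ge0_le_integral => //.
  - exact: measurable_expR_affine.
  - apply: emeasurable_funD => //.
    exact: measurable_expR_affine.
  - by move=> x _; rewrite -EFinD lee_fin; exact: lr_le.
by rewrite EFinB leeBlDr.
Qed.

End normal_tilt.

Section gauss_iint.
Context {R : realType}.
Local Open Scope ereal_scope.

Lemma gauss_iint_ge0 n (f : n.-tuple R -> \bar R) m :
  (forall z, 0 <= f z) -> 0 <= gauss_iint f m.
Proof.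
elim: n f m => [|n IH] f m f0 /=; first exact: f0.
by apply: integral_ge0 => x _; exact: IH.
Qed.

Lemma gauss_iint_cst n (c : \bar R) m :
  gauss_iint (fun _ : n.-tuple R => c) m = c.
Proof.
elim: n m => [|n IH] m //=; under eq_integral do rewrite IH.
by rewrite integral_cst// -[RHS]mule1; congr (_ * _); exact: probability_setT.
Qed.

Lemma measurable_gauss_iint n d (X : measurableType d)
    (F : X * n.-tuple R -> \bar R) m :
  measurable_fun setT F -> (forall p, 0 <= F p) ->
  measurable_fun setT (fun x => gauss_iint (fun t => F (x, t)) m).
Proof.
elim: n d X F m => [|n IH] d X F m mF F0 /=.
  exact: measurable_fun_pair1.
pose G (q : (X * R) * n.-tuple R) := F (q.1.1, [tuple of q.1.2 :: q.2]).
have mG : measurable_fun setT G.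
  apply: measurableT_comp mF _; apply: measurable_fun_pair => /=.
    exact: measurableT_comp.
  by apply: measurable_cons => //; exact: measurableT_comp.
apply: (@measurable_fun_fubini_tonelli_F _ _ X _ R (normal_prob (m 0%N) 1) _
  (IH _ _ G (fun j => m j.+1) mG (fun q => F0 _))).
by move=> q; apply: gauss_iint_ge0 => t; exact: F0.
Qed.

Lemma measurable_tuple_section n (f : n.+1.-tuple R -> \bar R) x :
  measurable_fun setT f ->
  measurable_fun setT (fun t : n.-tuple R => f [tuple of x :: t]).
Proof. by move=> mf; apply: measurableT_comp mf _; exact: measurable_cons. Qed.

Lemma measurable_gauss_iint_cons n (f : n.+1.-tuple R -> \bar R) m :
  measurable_fun setT f -> (forall z, 0 <= f z) ->
  measurable_fun setT
    (fun x : R => gauss_iint (fun t : n.-tuple R => f [tuple of x :: t]) m).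
Proof.
move=> mf f0.
apply: (@measurable_gauss_iint n _ _ (fun p => f [tuple of p.1 :: p.2])) => //.
by apply: measurableT_comp mf _; exact: measurable_cons.
Qed.

Lemma measurable_fun_nth n (g : R -> \bar R) (i : 'I_n) :
  measurable_fun setT g ->
  measurable_fun setT (fun z : n.-tuple R => g (nth 0%R z i)).
Proof.
move=> mg.
have -> : (fun z : n.-tuple R => g (nth 0%R z i)) = g \o (fun z => tnth z i).
  by apply: funext => z /=; rewrite (tnth_nth 0%R).
exact: measurableT_comp mg (measurable_tnth i).
Qed.

Lemma gauss_iint_le n (f g : n.-tuple R -> \bar R) m :
  measurable_fun setT f -> measurable_fun setT g ->
  (forall z, 0 <= f z) -> (forall z, f z <= g z) ->
  gauss_iint f m <= gauss_iint g m.
Proof.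
elim: n f g m => [|n IH] f g m mf mg f0 fg /=; first exact: fg.
have g0 z : 0 <= g z by exact: le_trans (f0 z) (fg z).
apply: ge0_le_integral => //.
- by move=> x _; exact: gauss_iint_ge0.
- exact: measurable_gauss_iint_cons.
- exact: measurable_gauss_iint_cons.
- by move=> x _; apply: IH => //; exact: measurable_tuple_section.
Qed.

Lemma gauss_iintD n (f g : n.-tuple R -> \bar R) m :
  measurable_fun setT f -> measurable_fun setT g ->
  (forall z, 0 <= f z) -> (forall z, 0 <= g z) ->
  gauss_iint (fun z => f z + g z) m = gauss_iint f m + gauss_iint g m.
Proof.
elim: n f g m => [|n IH] f g m mf mg f0 g0 //=.
rewrite -ge0_integralD//.
- apply: eq_integral => x _.
  by apply: IH => //; exact: measurable_tuple_section.
- by move=> x _; exact: gauss_iint_ge0.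
- exact: measurable_gauss_iint_cons.
- by move=> x _; exact: gauss_iint_ge0.
- exact: measurable_gauss_iint_cons.
Qed.

Lemma gauss_iintMr n (f : n.-tuple R -> \bar R) (c : R) m : (0 <= c)%R ->
  measurable_fun setT f -> (forall z, 0 <= f z) ->
  gauss_iint (fun z => f z * c%:E) m = gauss_iint f m * c%:E.
Proof.
elim: n f m => [|n IH] f m c0 mf f0 //=.
rewrite -ge0_integralZr//.
- apply: eq_integral => x _.
  by apply: IH => //; exact: measurable_tuple_section.
- exact: measurable_gauss_iint_cons.
- by move=> x _; exact: gauss_iint_ge0.
Qed.

Lemma gauss_iint_sum (I : Type) (s : seq I) n
    (F : I -> n.-tuple R -> \bar R) m :
  (forall i, measurable_fun setT (F i)) -> (forall i z, 0 <= F i z) ->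
  gauss_iint (fun z => \sum_(i <- s) F i z) m =
  \sum_(i <- s) gauss_iint (F i) m.
Proof.
move=> mF F0; elim: s => [|a s IH].
  by under eq_fun do rewrite big_nil; rewrite big_nil gauss_iint_cst.
under eq_fun do rewrite big_cons; rewrite big_cons -IH.
apply: gauss_iintD => //.
- exact: emeasurable_sum.
- by move=> z; exact: sume_ge0.
Qed.

Lemma gauss_iint_nth n (g : R -> \bar R) i m : (i < n)%N ->
  gauss_iint (fun z : n.-tuple R => g (nth 0%R z i)) m =
  \int[normal_prob (m i) 1]_x g x.
Proof.
elim: n i m => [//|n IH] [|i] m /= ltin.
  by apply: eq_integral => x _; exact: gauss_iint_cst.
under eq_integral do rewrite (IH i (fun j => m j.+1)) //.
by rewrite integral_cst// -[RHS]mule1; congr (_ * _); exact: probability_setT.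
Qed.

Lemma gauss_iint_tilt n (f : n.-tuple R -> \bar R) (l : R) i : (i < n)%N ->
  measurable_fun setT f -> (forall z, 0 <= f z) ->
  gauss_iint (fun z => f z * (normal_lr l (nth 0%R z i))%:E) (fun=> 0%R) =
  gauss_iint f (comp_mean l i).
Proof.
elim: n f i => [//|n IH] f [|i] /= ltin mf f0.
  have -> : (fun j => comp_mean l 0 j.+1) = (fun=> 0%R) by [].
  rewrite [comp_mean l 0 0]/comp_mean eqxx -(normal_tilt l).
  - apply: eq_integral => x _.
    apply: gauss_iintMr => //; first exact: expR_ge0.
    exact: measurable_tuple_section.
  - by move=> x; exact: gauss_iint_ge0.
  - exact: measurable_gauss_iint_cons.
have -> : (fun j => comp_mean l i.+1 j.+1) = comp_mean l i by [].
apply: eq_integral => x _.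
by apply: IH => //; exact: measurable_tuple_section.
Qed.

Lemma gauss_iint_sum_tilt k (F : 'I_k -> k.-tuple R -> \bar R) (l : R) :
  (forall i, measurable_fun setT (F i)) -> (forall i z, 0 <= F i z) ->
  \sum_(i < k) gauss_iint (F i) (comp_mean l i) =
  gauss_iint (fun z => \sum_(i < k) F i z * (normal_lr l (nth 0%R z i))%:E)
    (fun=> 0%R).
Proof.
move=> mF F0; rewrite gauss_iint_sum => [|i|i z].
- by apply: eq_bigr => i _; rewrite gauss_iint_tilt.
- apply: emeasurable_funM => //.
  exact: (measurable_fun_nth _ _ i (measurable_normal_lr l)).
- by rewrite mule_ge0// lee_fin expR_ge0.
Qed.

Lemma gauss_iint_sum_trunc_ge k (l a : R) : (0 <= a)%R ->
  (k%:R * (1 - expR (- (a ^+ 2 / 2))))%:E <=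
  gauss_iint (fun z : k.-tuple R => \sum_(i < k)
    (normal_lr l (nth 0%R z i) * (nth 0%R z i <= l + a)%R%:R)%:E) (fun=> 0%R).
Proof.
move=> a0; rewrite gauss_iint_sum => [|i|i z].
- have -> : (k%:R * (1 - expR (- (a ^+ 2 / 2))))%:E =
      \sum_(i < k) (1 - expR (- (a ^+ 2 / 2)))%:E.
    by rewrite sumEFin sumr_const card_ord mulr_natl.
  apply: lee_sum => i _.
  pose trunc x := (normal_lr l x * (x <= l + a)%R%:R)%:E.
  rewrite (gauss_iint_nth _ trunc)//.
  exact: normal_lr_trunc.
- exact: (measurable_fun_nth _ _ i (measurable_normal_lr_trunc l (l + a))).
- by rewrite lee_fin mulr_ge0 ?expR_ge0.
Qed.

End gauss_iint.

Section estimator.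
Context {R : realType}.

Lemma normal_lr_homo (l : R) : 0 <= l -> {homo normal_lr l : x y / x <= y}.
Proof. by move=> l0 x y xy; rewrite ler_expR lerD2r ler_wpM2l. Qed.

Lemma sum_trunc_le (I : finType) (f : R -> R) (u : I -> R) (p : I) (t : R) :
  (forall x, 0 <= f x) -> {homo f : x y / x <= y} ->
  \sum_i f (u i) * (u i <= t)%R%:R <= \sum_i (p != i)%:R * f (u i) + f t.
Proof.
move=> f0 f_homo; rewrite (bigD1 p)//= [X in _ <= X + _](bigD1 p)//=.
rewrite eqxx mul0r add0r addrC; apply: lerD.
  apply: ler_sum => i ip; rewrite eq_sym ip mul1r.
  by case: (u i <= t)%R; rewrite ?mulr1 ?mulr0 ?f0.
by have [upt|_] := leP (u p) t; rewrite ?mulr1 ?mulr0 ?f0 ?f_homo.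
Qed.

Lemma measurable_estimator_miss (k : nat) (Psi : k.-tuple R -> 'I_k)
    (i : 'I_k) :
  measurable_estimator Psi ->
  measurable_fun setT (fun z => ((Psi z != i)%:R)%:E : \bar R).
Proof.
move=> mPsi; apply/measurable_EFinP/measurable_natmul_bool/measurable_neg.
apply: (measurable_fun_bool true); rewrite setTI.
have -> : (fun z => Psi z == i) @^-1` [set true] = Psi @^-1` [set i].
  by apply/seteqP; split => z /= /eqP.
exact: mPsi.
Qed.

Local Open Scope ereal_scope.

Lemma sum_estimator_error_ge k (l a : R) (Psi : k.-tuple R -> 'I_k) :
  (0 <= l)%R -> (0 <= a)%R -> measurable_estimator Psi ->
  (k%:R * (1 - expR (- (a ^+ 2 / 2))) - normal_lr l (l + a))%:E <=
  \sum_(i < k) gauss_iint (fun z => ((Psi z != i)%:R)%:E) (comp_mean l i).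
Proof.
move=> l0 a0 mPsi.
pose miss_lr z := \sum_(i < k)
  ((Psi z != i)%:R)%:E * (normal_lr l (nth 0%R z i))%:E.
have miss_lr0 z : 0 <= miss_lr z.
  by apply: sume_ge0 => i _; rewrite mule_ge0// lee_fin ?expR_ge0.
have m_miss_lr : measurable_fun setT miss_lr.
  apply: emeasurable_sum => i; apply: emeasurable_funM.
    exact: measurable_estimator_miss.
  exact: (measurable_fun_nth _ _ i (measurable_normal_lr l)).
rewrite EFinB leeBlDr// gauss_iint_sum_tilt//; last first.
  by move=> i; exact: measurable_estimator_miss.
rewrite -(gauss_iint_cst k (normal_lr l (l + a))%:E (fun=> 0%R)) -gauss_iintD//;
  last by move=> _; rewrite lee_fin expR_ge0.
apply: le_trans (gauss_iint_sum_trunc_ge k l a a0) _.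
apply: gauss_iint_le.
- apply: emeasurable_sum => i.
  exact: (measurable_fun_nth _ _ i (measurable_normal_lr_trunc l (l + a))).
- exact: emeasurable_funD.
- move=> z; rewrite sumEFin lee_fin sumr_ge0// => i _.
  by rewrite mulr_ge0 ?expR_ge0.
move=> z; under [X in _ <= X + _]eq_bigr => i _ do rewrite -EFinM.
rewrite !sumEFin -EFinD lee_fin.
by apply: sum_trunc_le => [x|]; [exact: expR_ge0 | exact: normal_lr_homo].
Qed.

End estimator.

Section numeric.
Context {R : realType}.

Lemma expRN_mulD1_le1 (x : R) : expR (- x) * (1 + x) <= 1.
Proof.
rewrite -[leRHS](expRxMexpNx_1 x) [leRHS]mulrC ler_wpM2l ?expR_ge0//.
exact: expR_ge1Dx.
Qed.

Lemma ln_nat_ge_half (k : nat) : (2 <= k)%N -> 1 / 2 <= ln (k%:R : R).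
Proof.
move=> k2; have k2R : (2 : R) <= k%:R by rewrite (ler_nat R 2 k).
rewrite -ler_expR lnK ?posrE; last lra.
have := expRN_mulD1_le1 (- (1 / 2)); rewrite opprK.
have := expR_gt0 (1 / 2 : R); nra.
Qed.

Lemma normal_lr_sqrt_ln_le (k : nat) (l : R) : (2 <= k)%N ->
  l = 1 / 32 * Num.sqrt (ln k%:R) -> k%:R^-1 * normal_lr l (l + 3) <= 8 / 11.
Proof.
move=> k2 ->; set L := ln (k%:R : R).
have L_ge : 1 / 2 <= L by exact: ln_nat_ge_half.
have kE : k%:R = expR L by rewrite lnK// posrE ltr0n (leq_trans _ k2).
have [s0 s2] : 0 <= Num.sqrt L /\ Num.sqrt L ^+ 2 = L.
  by split; [exact: sqrtr_ge0 | apply: sqr_sqrtr; lra].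
have exp_le : 1 / 32 * Num.sqrt L * (1 / 32 * Num.sqrt L + 3) -
    (1 / 32 * Num.sqrt L) ^+ 2 / 2 <= L - 3 / 4 * L by nra.
rewrite kE -expRN -expRD (@le_trans _ _ (expR (- (3 / 4 * L))))//.
  by rewrite ler_expR /normal_lr; lra.
have := expRN_mulD1_le1 (3 / 4 * L); have := expR_gt0 (- (3 / 4 * L)); nra.
Qed.

End numeric.

Theorem lemma7p3 (R : realType) :
  exists (c C1 C2 : R), 0 < c /\ 0 < C1 /\ 0 < C2 /\
    forall k : nat, (2 <= k)%N ->
      exists lambda : R,
        C1 * Num.sqrt (ln k%:R) <= lambda /\
        lambda <= C2 * Num.sqrt (ln k%:R) /\
        forall Psi : k.-tuple R -> 'I_k,
          measurable_estimator Psi ->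
          (c%:E <= mixture_error lambda Psi)%E.
Proof.
exists (1 / 11), (1 / 32), (1 / 32); do 3 (split; first lra).
move=> k k2; pose l : R := 1 / 32 * Num.sqrt (ln k%:R).
have l0 : 0 <= l by rewrite mulr_ge0 ?sqrtr_ge0.
exists l; do 2 (split; first exact: lexx).
move=> Psi mPsi; rewrite /mixture_error.
have err_ge := sum_estimator_error_ge k l 3 Psi l0 (ler0n R 3) mPsi.
apply: le_trans (lee_wpmul2l _ err_ge); first last.
  by rewrite lee_fin invr_ge0 ler0n.
have k0 : (0 : R) < k%:R by rewrite ltr0n (leq_trans _ k2).
have lr_le := normal_lr_sqrt_ln_le k l k2 (erefl l).
have tail_le := expRN_mulD1_le1 (3 ^+ 2 / 2 : R).
have := expR_gt0 (- (3 ^+ 2 / 2) : R).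
rewrite -EFinM lee_fin mulrBr mulrA mulVf ?gt_eqF// mul1r.
lra.
Qed.
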